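(* Let $Q$ be a quadratical quasigroup of order $25$ whose elements are ordered in some way. If $Q$ is $k$-translatable with respect to this ordering, with $1\le k<25$, then $k=7$ or $k=18$.
   Context: A quadratical quasigroup is a quasigroup satisfying $xy\cdot x=zx\cdot yz$ for all $x,y,z$ (equivalently, a groupoid satisfying $x\cdot x=x$, $yx\cdot xy=x$, $xy\cdot zw=xz\cdot yw$). A finite groupoid with ordering $q_1,\dots,q_n$ is $k$-translatable ($1\le k<n$) with respect to this ordering if $q_i\cdot q_j=q_{i-1}\cdot q_{j-k}$ for all $i\in\{2,\dots,n\}$, $j\in\{1,\dots,n\}$, indices taken modulo $n$ in $\{1,\dots,n\}$. *)

From mathcomp Require Import all_boot.
Set Implicit Arguments. Unset Strict Implicit. Unset Printing Implicit Defensive.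

Definition quasigroup (T : Type) (op : T -> T -> T) : Prop :=
  (forall a : T, bijective (op a)) /\ (forall a : T, bijective (fun x => op x a)).

Definition quadratical (T : Type) (op : T -> T -> T) : Prop :=
  forall x y z : T, op (op x y) x = op (op z x) (op y z).

(* Ordering q_1..q_n is encoded 0-based: q : 'I_n -> T, with q i standing
   for q_{i+1}.  Indices are taken modulo n.  k-translatable: for all
   i in {2..n} (0-based: 1 <= i < n) and all j,
   q_i * q_j = q_{i-1} * q_{j-k}. *)
(* The order is written m.+1 so that indices mod m.+1 can be built with inord. *)
Definition translatable (T : Type) (m : nat) (op : T -> T -> T)
  (q : 'I_m.+1 -> T) (k : nat) : Prop :=
  forall i j : 'I_m.+1, 1 <= i ->
    op (q i) (q j)
    = op (q (inord i.-1)) (q (inord ((j + m.+1 - k %% m.+1) %% m.+1))).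

From mathcomp Require Import all_boot.
From mathcomp Require Import zify.

(* Write q_t for q_(t mod n).  Iterating translatability gives q_i q_j = q_0 q_(j - ik),
   and the quadratical law at x = y = z, after cancelling xx, makes the operation
   idempotent, so q_t = q_0 q_(t - tk).  Instantiating the quadratical law at
   x = q_0, y = z = q_(1-k) and cancelling q_0 then yields q_(-k) = q_(1 - k + k^2),
   i.e. n divides k^2 + 1; for n = 25 the only such k are 7 and 18. *)

Set Implicit Arguments.
Unset Strict Implicit.
Unset Printing Implicit Defensive.

Lemma quadratical_idempotent (T : Type) (op : T -> T -> T) :
  (forall a, injective (op a)) -> quadratical op -> idempotent_op op.
Proof. by move=> op_inj quad x; apply: (op_inj (op x x)); rewrite -quad. Qed.

Lemma sqr_sub_mod (n a : nat) : 0 < n -> (n - a %% n) ^ 2 = a ^ 2 %[mod n].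
Proof.
move=> n_gt0; have le_an : a %% n <= n by rewrite ltnW ?ltn_pmod.
rewrite -(modnMDl (2 * (a %% n))) -[RHS]modnXm.
have -> : 2 * (a %% n) * n + (n - a %% n) ^ 2 = n * n + (a %% n) ^ 2 by nia.
by rewrite modnMDl.
Qed.

Section Translatable.

Variables (T : Type) (m : nat) (op : T -> T -> T) (q : 'I_m.+1 -> T) (k : nat).
Local Notation n := m.+1.

Definition qmod (t : nat) : T := q (inord (t %% n)).

Lemma qmod_congr t1 t2 : t1 = t2 %[mod n] -> qmod t1 = qmod t2.
Proof. by rewrite /qmod => ->. Qed.

Lemma qmod_ord (i : 'I_n) : qmod i = q i.
Proof. by rewrite /qmod modn_small ?inord_val. Qed.

Lemma qmod_inj : injective q -> forall t1 t2, qmod t1 = qmod t2 -> t1 = t2 %[mod n].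
Proof.
move=> q_inj t1 t2 /q_inj /(congr1 val).
by rewrite /= !inordK ?ltn_mod.
Qed.

(* [k'] represents [-k] modulo [n]. *)
Local Notation k' := (n - k %% n).

Hypothesis q_tr : translatable op q k.

Lemma translatable_step i j : i < m ->
  op (qmod i.+1) (qmod j) = op (qmod i) (qmod (j + k')).
Proof.
move=> lt_im; have lt_Sin : i.+1 < n by [].
rewrite {1}/qmod (modn_small lt_Sin) q_tr ?inordK ?ltn_mod //=.
rewrite [qmod i]/qmod (modn_small (ltnW lt_Sin)).
congr (op _ _); apply: (@qmod_congr (j %% n + n - k %% n)).
by rewrite -addnBA ?modnDml // ltnW ?ltn_mod.
Qed.

Lemma translatable_row i j : op (qmod i) (qmod j) = op (qmod 0) (qmod (j + i * k')).
Proof.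
have row_small l : l < n -> forall j, op (qmod l) (qmod j) = op (qmod 0) (qmod (j + l * k')).
  elim: l => [|l IHl] lt_ln j'; first by rewrite addn0.
  by rewrite translatable_step // IHl ?(ltnW lt_ln) // mulSn addnA.
have -> : qmod i = qmod (i %% n) by apply: qmod_congr; rewrite modn_mod.
rewrite row_small ?ltn_mod //.
congr (op _ _); apply: qmod_congr.
by apply/eqP; rewrite eqn_modDl modnMml.
Qed.

Theorem translatable_quadratical_dvd :
  injective q -> (forall a, injective (op a)) -> quadratical op -> n %| k ^ 2 + 1.
Proof.
move=> q_inj op_inj quad; have idem := quadratical_idempotent op_inj quad.
have diag t : qmod t = op (qmod 0) (qmod (t + t * k')).
  by rewrite -translatable_row idem.
have mul_0u : op (qmod 0) (qmod k'.+1) = qmod 1.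
  by rewrite [RHS]diag mul1n add1n.
have mul_u0 : op (qmod k'.+1) (qmod 0) = qmod k'.
  by rewrite translatable_row [RHS]diag add0n mulSn.
have := quad (qmod 0) (qmod k'.+1) (qmod k'.+1).
rewrite mul_0u mul_u0 idem (translatable_row 1) (translatable_row k').
move=> /op_inj /(qmod_inj q_inj) /eqP.
rewrite add0n mul1n [k'.+1 + _]addSnnS -[k' in X in X == _]addn0 eqn_modDl mod0n eq_sym.
by rewrite -addn1 mulnn -modnDml sqr_sub_mod // modnDml.
Qed.

End Translatable.

Lemma sqrtm1_mod25 k : 0 < k < 25 -> 25 %| k ^ 2 + 1 -> k = 7 \/ k = 18.
Proof.
move=> k_range k_sqrt.
have : k \in [seq x <- iota 1 24 | 25 %| x ^ 2 + 1].
  by rewrite mem_filter k_sqrt mem_iota; exact: k_range.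
by rewrite /= !inE => /orP[] /eqP ->; [left | right].
Qed.

Theorem corollary8p18 (T : finType) (op : T -> T -> T) (q : 'I_25 -> T) (k : nat) :
  #|T| = 25 -> bijective q -> quasigroup op -> quadratical op ->
  1 <= k < 25 -> translatable op q k ->
  k = 7 \/ k = 18.
Proof.
move=> _ /bij_inj q_inj [op_bij _] quad k_range q_tr.
apply: sqrtm1_mod25 => //.
exact: translatable_quadratical_dvd q_tr q_inj (fun a => bij_inj (op_bij a)) quad.
Qed.
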